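(* Let $n,k\ge 1$ be integers, let $z_1,\dots,z_n$ be indeterminates, and let $\lambda=(\lambda_1,\dots,\lambda_k)$ be integers with $0\le\lambda_1\le\lambda_2\le\dots\le\lambda_k$. Then \[ \det(H(\lambda;n))=\sum_{b\in C(k,n)} S(z(b);\lambda)\,D(z(b))^2 . \]
   Context: $p_m=\sum_{i=1}^n z_i^m$ for $m\ge0$. $H(\lambda;n)$ is the $k\times k$ matrix with entries $H(\lambda;n)_{i,j}=p_{\lambda_i+j-1}$. For indeterminates $x_1,\dots,x_k$, $V(x_1,\dots,x_k;\lambda)$ is the $k\times k$ matrix with entries $x_j^{\lambda_i}$ (row $i$, column $j$), $D(x_1,\dots,x_k)=\prod_{1\le i<j\le k}(x_j-x_i)$ (with $D(x_1)=1$), and $S(x_1,\dots,x_k;\lambda)=\det V(x_1,\dots,x_k;\lambda)/D(x_1,\dots,x_k)$ (a polynomial). $C(k,n)$ is the set of $k$-element subsets $b=\{b_1<\dots<b_k\}$ of $\{1,\dots,n\}$, and $z(b)=(z_{b_1},\dots,z_{b_k})$. *)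

From HB Require Import structures.
From mathcomp Require Import all_boot all_order all_algebra.
From mathcomp.multinomials Require Import mpoly.
From Stdlib Require Import ClassicalEpsilon.
Set Implicit Arguments. Unset Strict Implicit. Unset Printing Implicit Defensive.
Import GRing.Theory.
Local Open Scope ring_scope.

Definition psum (R : comNzRingType) (n m : nat) : {mpoly R[n]} :=
  \sum_(i < n) 'X_i ^+ m.

(* H(lambda; n)_{i,j} = p_{lambda_i + j - 1} (1-based) = p_{lambda_i + j} (0-based j) *)
Definition Hmx (R : comNzRingType) (n k : nat) (lam : 'I_k -> nat) : 'M[{mpoly R[n]}]_k :=
  \matrix_(i < k, j < k) psum R n (lam i + j).

Definition Vmx (T : comNzRingType) (k : nat) (x : 'I_k -> T) (lam : 'I_k -> nat) : 'M[T]_k :=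
  \matrix_(i < k, j < k) x j ^+ lam i.

Definition Dprod (T : comNzRingType) (k : nat) (x : 'I_k -> T) : T :=
  \prod_(i < k) \prod_(j < k | (i < j)%N) (x j - x i).

(* S(x;lambda) = det V / D as a polynomial in k indeterminates: the q with
   q * D = det V (unique, D being a nonzero divisor) *)
Definition Spoly (R : comNzRingType) (k : nat) (lam : 'I_k -> nat) : {mpoly R[k]} :=
  epsilon (inhabits 0)
    (fun q : {mpoly R[k]} =>
       q * Dprod (fun j : 'I_k => 'X_j) = \det (Vmx (fun j : 'I_k => 'X_j) lam)).

(* z(b) = (z_{b_1},...,z_{b_k}) for b a subset of {1..n} listed increasingly *)
Definition zsub (R : comNzRingType) (n k : nat) (b : {set 'I_n}) : 'I_k -> {mpoly R[n]} :=
  fun j => nth 0 [seq 'X_i | i <- enum b] j.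

From HB Require Import structures.
From mathcomp Require Import all_boot all_order all_algebra all_fingroup.
From mathcomp.multinomials Require Import mpoly.
From Stdlib Require Import ClassicalEpsilon.
Set Implicit Arguments. Unset Strict Implicit. Unset Printing Implicit Defensive.
Import GRing.Theory.
Local Open Scope ring_scope.

(* H factors as A B with A_(i,l) = z_l^(lam_i) (k x n) and B_(l,j) = z_l^j
   (n x k), so by the Cauchy-Binet formula det H is the sum over k-subsets b
   of det V(z(b); lam) * det Vandermonde(z(b)) = S(z(b); lam) D(z(b)) * D(z(b)).
   S exists because V(x; lam) = C * Vandermonde(x), where row i of C holds the
   coefficients of the remainder of X^(lam_i) modulo prod_j (X - x_j); hence
   D(x) divides det V(x; lam) over any commutative ring. *)

Section VandermondeFactor.
Variables (T : comNzRingType) (k : nat) (x : 'I_k -> T).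

Lemma Dprod_Vandermonde : Dprod x = \det (Vandermonde k (\row_j x j)).
Proof.
rewrite det_Vandermonde; apply: eq_bigr => i _.
by apply: eq_bigr => j _; rewrite !mxE.
Qed.

Lemma Vmx_Vandermonde_factor (lam : 'I_k -> nat) :
  exists C : 'M[T]_k, Vmx x lam = C *m Vandermonde k (\row_j x j).
Proof.
pose P := \prod_(j < k) ('X - (x j)%:P).
have monP : P \is monic by exact: monic_prod_XsubC.
have sizeP : size P = k.+1.
  by rewrite size_prod_XsubC /index_enum unlock -enumT -cardT card_ord.
have rootP j : P.[x j] = 0.
  by rewrite horner_prod (bigD1 j) //= hornerXsubC subrr mul0r.
pose r i := Pdiv.Ring.rmodp 'X^(lam i) P.
exists (\matrix_(i, l) (r i)`_l); apply/matrixP => i j; rewrite !mxE.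
have /(congr1 (horner^~ (x j))) := Pdiv.RingMonic.rdivp_eq monP 'X^(lam i).
rewrite hornerXn hornerD hornerM rootP mulr0 add0r => ->.
have size_r : (size (r i) <= k)%N.
  by rewrite -ltnS -sizeP Pdiv.Ring.ltn_rmodpN0 ?monic_neq0.
by rewrite (horner_coef_wide _ size_r); apply: eq_bigr => l _; rewrite !mxE.
Qed.

Lemma Dprod_dvd_det_Vmx (lam : 'I_k -> nat) :
  exists q, q * Dprod x = \det (Vmx x lam).
Proof.
have [C ->] := Vmx_Vandermonde_factor lam.
by exists (\det C); rewrite det_mulmx Dprod_Vandermonde.
Qed.

End VandermondeFactor.

Section DprodVmxMaps.
Variables (T : comNzRingType) (k : nat).

Lemma eq_Dprod (x y : 'I_k -> T) : x =1 y -> Dprod x = Dprod y.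
Proof.
by move=> xy; apply: eq_bigr => i _; apply: eq_bigr => j _; rewrite !xy.
Qed.

Lemma eq_Vmx (x y : 'I_k -> T) lam : x =1 y -> Vmx x lam = Vmx y lam.
Proof. by move=> xy; apply/matrixP => i j; rewrite !mxE xy. Qed.

Variables (U : comNzRingType) (phi : {rmorphism T -> U}) (x : 'I_k -> T).

Lemma rmorph_Dprod : phi (Dprod x) = Dprod (phi \o x).
Proof.
rewrite rmorph_prod; apply: eq_bigr => i _.
by rewrite rmorph_prod; apply: eq_bigr => j _; rewrite rmorphB.
Qed.

Lemma map_Vmx (lam : 'I_k -> nat) : map_mx phi (Vmx x lam) = Vmx (phi \o x) lam.
Proof. by apply/matrixP => i j; rewrite !mxE rmorphXn. Qed.

End DprodVmxMaps.

Lemma Spoly_spec (R : comNzRingType) (k : nat) (lam : 'I_k -> nat) :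
  Spoly R lam * Dprod (fun j : 'I_k => 'X_j) = \det (Vmx (fun j : 'I_k => 'X_j) lam).
Proof. exact: (epsilon_spec (inhabits 0) _ (Dprod_dvd_det_Vmx _ lam)). Qed.

Lemma mmap_Spoly (R S : comNzRingType) (f : {rmorphism R -> S}) (k : nat)
    (x : 'I_k -> S) (lam : 'I_k -> nat) :
  mmap f x (Spoly R lam) * Dprod x = \det (Vmx x lam).
Proof.
have evalX : mmap f x \o (fun j : 'I_k => 'X_j) =1 x.
  by move=> j /=; rewrite mmapX mmap1U.
have := congr1 (mmap f x) (Spoly_spec R lam).
rewrite rmorphM /= rmorph_Dprod -det_map_mx map_Vmx.
by rewrite (eq_Dprod evalX) (eq_Vmx _ evalX).
Qed.

Section CauchyBinet.
Variables (T : comNzRingType) (k n : nat).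

Lemma det_mulmx_ffun (A : 'M[T]_(k, n)) (B : 'M[T]_(n, k)) :
  \det (A *m B) =
  \sum_(f : {ffun 'I_k -> 'I_n}) (\prod_i A i (f i)) * \det (rowsub f B).
Proof.
transitivity (\sum_(s : 'S_k) \sum_(f : {ffun 'I_k -> 'I_n})
   (-1) ^+ s * ((\prod_i A i (f i)) * \prod_i B (f i) (s i))).
  apply: eq_bigr => s _; rewrite -mulr_sumr; congr (_ * _).
  under eq_bigr do rewrite mxE.
  by rewrite bigA_distr_bigA; apply: eq_bigr => f _; rewrite -big_split.
rewrite exchange_big; apply: eq_bigr => f _.
rewrite [\det (rowsub f B)]/determinant mulr_sumr; apply: eq_bigr => s _.
by rewrite mulrCA; congr (_ * (_ * _)); apply: eq_bigr => i _; rewrite mxE.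
Qed.

Lemma det_rowsub_perm (B : 'M[T]_(n, k)) (g : 'I_k -> 'I_n) (s : 'S_k) :
  \det (rowsub (g \o s) B) = (-1) ^+ s * \det (rowsub g B).
Proof.
have -> : rowsub (g \o s) B = row_perm s (rowsub g B).
  by apply/matrixP => i j; rewrite !mxE.
by rewrite row_permE det_mulmx det_perm.
Qed.

Variable g : {set 'I_n} -> 'I_k -> 'I_n.
Hypothesis g_inj : forall b : {set 'I_n}, #|b| = k -> injective (g b).
Hypothesis g_mem : forall b : {set 'I_n}, #|b| = k -> forall i, g b i \in b.

Lemma imset_enumeration (b : {set 'I_n}) (s : 'S_k) :
  #|b| = k -> (g b \o s) @: [set: 'I_k] = b.
Proof.
move=> bk; apply/eqP; rewrite eqEcard card_imset; last first.
  exact: inj_comp (g_inj bk) perm_inj.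
rewrite cardsT card_ord bk leqnn andbT.
by apply/subsetP => _ /imsetP [i _ ->]; exact: g_mem.
Qed.

Lemma injective_ffunP (f : {ffun 'I_k -> 'I_n}) :
  injectiveb f ->
  exists (b : {set 'I_n}) (s : 'S_k), #|b| = k /\ f = [ffun i => g b (s i)].
Proof.
move/injectiveP=> f_inj; set b := f @: [set: 'I_k].
have bk : #|b| = k by rewrite card_imset // cardsT card_ord.
have /fin_all_exists [t gt] i : exists j, g b j = f i.
  have : f i \in (g b \o (1%g : 'S_k)) @: [set: 'I_k].
    by rewrite imset_enumeration ?imset_f.
  by case/imsetP => j _ ->; exists j; rewrite /= perm1.
have t_inj : injective t by move=> i1 i2 /(congr1 (g b)); rewrite !gt => /f_inj.
by exists b, (perm t_inj); split=> //; apply/ffunP => i; rewrite !ffunE permE gt.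
Qed.

Lemma big_injective_ffun (V : nmodType) (F : {ffun 'I_k -> 'I_n} -> V) :
  \sum_(f : {ffun 'I_k -> 'I_n} | injectiveb f) F f =
  \sum_(b : {set 'I_n} | #|b| == k) \sum_(s : 'S_k) F [ffun i => g b (s i)].
Proof.
pose h (p : {set 'I_n} * 'S_k) := [ffun i => g p.1 (p.2 i)].
pose P := [set p : {set 'I_n} * 'S_k | #|p.1| == k].
have h_inj : {in P &, injective h}.
  move=> [b s] [b' s'] /[!inE] /= /eqP bk /eqP b'k hbs.
  have eb : b = b'.
    rewrite -(imset_enumeration s bk) -(imset_enumeration s' b'k).
    by apply: eq_imset => i; move/ffunP: hbs => /(_ i); rewrite !ffunE.
  subst b'; congr (_, _); apply/permP => i; apply: (g_inj bk).
  by move/ffunP: hbs => /(_ i); rewrite !ffunE.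
have imP : h @: P =i [pred f : {ffun 'I_k -> 'I_n} | injectiveb f].
  move=> f; rewrite inE; apply/imsetP/idP => [[[b s]] /[!inE] /= /eqP bk ->|].
    by apply/injectiveP => i j; rewrite !ffunE => /(g_inj bk) /perm_inj.
  by case/injective_ffunP => b [s [bk ->]]; exists (b, s); rewrite ?inE /= ?bk.
rewrite pair_big_dep -(eq_bigl _ _ imP) big_imset //.
by apply: eq_bigl => p; rewrite inE andbT.
Qed.

Lemma cauchy_binet (A : 'M[T]_(k, n)) (B : 'M[T]_(n, k)) :
  \det (A *m B) = \sum_(b : {set 'I_n} | #|b| == k)
                     \det (colsub (g b) A) * \det (rowsub (g b) B).
Proof.
rewrite det_mulmx_ffun (bigID (fun f : {ffun 'I_k -> 'I_n} => injectiveb f)) /=.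
rewrite [X in _ + X]big1 ?addr0.
  rewrite big_injective_ffun; apply: eq_bigr => b _.
  rewrite [\det (colsub _ _)]/determinant mulr_suml; apply: eq_bigr => s _.
  rewrite (_ : rowsub _ B = rowsub (g b \o s) B); last first.
    by apply/matrixP => i j; rewrite !mxE ffunE.
  rewrite det_rowsub_perm mulrCA mulrA; congr (_ * _ * _).
  by apply: eq_bigr => i _; rewrite !mxE ffunE.
move=> f /injectivePn [i1 [i2 ne f12]].
by rewrite (determinant_alternate ne) ?mulr0 // => j; rewrite !mxE f12.
Qed.

End CauchyBinet.

Section EnumSet.
Variables (T : finType) (x0 : T) (k : nat) (A : {set T}).
Hypothesis Ak : #|A| = k.

Lemma nth_enum_set_inj : injective (fun i : 'I_k => nth x0 (enum A) i).
Proof.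
move=> i j /eqP; rewrite nth_uniq ?enum_uniq // -?cardE ?Ak //.
by move/eqP/val_inj.
Qed.

Lemma mem_nth_enum_set (i : 'I_k) : nth x0 (enum A) i \in A.
Proof. by rewrite -mem_enum mem_nth // -cardE Ak. Qed.

End EnumSet.

Lemma zsubE (R : comNzRingType) n k (b : {set 'I_n}) x0 (j : 'I_k) :
  #|b| = k -> @zsub R n k b j = 'X_(nth x0 (enum b) j).
Proof. by move=> bk; rewrite /zsub (nth_map x0) // -cardE bk. Qed.

Lemma Hmx_mulmx (R : comNzRingType) n k (lam : 'I_k -> nat) :
  Hmx R n lam =
  (\matrix_(i < k, l < n) 'X_l ^+ lam i) *m (\matrix_(l < n, j < k) 'X_l ^+ j).
Proof.
by apply/matrixP => i j; rewrite !mxE; apply: eq_bigr => l _; rewrite !mxE exprD.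
Qed.

Unset Implicit Arguments.
Theorem theorem2p6 (R : idomainType) (n k : nat) (lam : 'I_k -> nat) :
  (0 < n)%N -> (0 < k)%N ->
  (forall i j : 'I_k, (i <= j)%N -> (lam i <= lam j)%N) ->
  \det (@Hmx R n k lam) =
  \sum_(b : {set 'I_n} | #|b| == k)
     mmap (@mpolyC n R) (@zsub R n k b) (@Spoly R k lam) * Dprod (@zsub R n k b) ^+ 2.
Proof.
case: n => [//|n] _ _ _.
pose g (b : {set 'I_n.+1}) (i : 'I_k) := nth ord0 (enum b) i.
rewrite Hmx_mulmx (cauchy_binet (g := g)); last 2 first.
- exact: nth_enum_set_inj.
- exact: mem_nth_enum_set.
apply: eq_bigr => b /eqP bk; have zE := zsubE R ord0 ^~ bk.
have -> : colsub (g b) (\matrix_(i, l) 'X_l ^+ lam i) = Vmx (zsub R b) lam.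
  by apply/matrixP => i j; rewrite !mxE zE.
have -> : rowsub (g b) (\matrix_(l, j) 'X_l ^+ j)
          = (Vandermonde k (\row_j zsub R b j))^T.
  by apply/matrixP => i j; rewrite !mxE zE.
by rewrite det_tr -Dprod_Vandermonde expr2 mulrA mmap_Spoly.
Qed.
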